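(* Assume (F), fix $\alpha\in\,]0,1[$, and let $0\le u^+<u^-\le V$ with $\hat\rho_{u^-}>\check\rho_{u^+}$. Then $\check\rho_{u^-}<\check\rho_{u^+}<\hat\rho_{u^-}<\hat\rho_{u^+}$ and $$u^--u^+\ \ge\ \frac{\beta}{2}\,\big(\check\rho_{u^+}-\check\rho_{u^-}\big).$$
   Context: Hypothesis (F): $R>0$; $f\in C^2([0,R];[0,+\infty))$ with $f(\rho)=\rho v(\rho)$, $v\in C^2([0,R];[0,+\infty))$; $f(0)=f(R)=0$; there are $B\ge\beta>0$ with $-B\le f''\le-\beta$ on $[0,R]$; $v'(\rho)<0$ for $\rho\in\,]0,R[$. Let $V:=\max_{[0,R]}v=v(0)$. Define $f_\alpha(\rho):=\alpha f(\rho/\alpha)$ for $\rho\in[0,\alpha R]$. For $u\in[0,V]$: $\tilde\rho_u$ is the unique solution of $f_\alpha'(\rho)=u$; $\varphi_u(\rho):=f_\alpha(\tilde\rho_u)+u(\rho-\tilde\rho_u)$ for $\rho\in[0,R]$; $\mathcal I_u:=\{\rho\in[0,R]: f(\rho)=\varphi_u(\rho)\}$, $\check\rho_u:=\min\mathcal I_u$, $\hat\rho_u:=\max\mathcal I_u$. *)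

From Stdlib Require Import Reals Lra.
Open Scope R_scope.

Definition Icc (a b : R) : R -> Prop := fun x => a <= x <= b.

(* g has derivative l at x, relative to the set D (one-sided at endpoints
   of an interval): limit of difference quotients along D \ {x}. *)
Definition derive_within (D : R -> Prop) (g : R -> R) (x l : R) : Prop :=
  limit1_in (fun y => (g y - g x) / (y - x)) (fun y => D y /\ y <> x) l x.

Definition cont_within (D : R -> Prop) (g : R -> R) (x : R) : Prop :=
  limit1_in g D (g x) x.

Definition C2_on (D : R -> Prop) (g g1 g2 : R -> R) : Prop :=
  forall x, D x ->
    derive_within D g x (g1 x) /\ derive_within D g1 x (g2 x) /\
    cont_within D g2 x.

Definition f_alpha (alpha : R) (f : R -> R) : R -> R :=
  fun rho => alpha * f (rho / alpha).

(* phi_u(rho) = f_alpha(rt) + u (rho - rt), rt = tilde rho_u *)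
Definition phi (alpha : R) (f : R -> R) (u rt : R) : R -> R :=
  fun rho => f_alpha alpha f rt + u * (rho - rt).

Definition Iset (Rr alpha : R) (f : R -> R) (u rt : R) : R -> Prop :=
  fun rho => 0 <= rho <= Rr /\ f rho = phi alpha f u rt rho.

Definition is_min (S : R -> Prop) (m : R) : Prop :=
  S m /\ forall y, S y -> m <= y.
Definition is_max (S : R -> Prop) (m : R) : Prop :=
  S m /\ forall y, S y -> y <= m.

From Stdlib Require Import Reals Lra.
Open Scope R_scope.

(* Write q_u := tilde rho_u / alpha, so that f'(q_u) = u, and l_u(t) := A_u + u t for the
   line phi_u.  Since f - l_u is strictly concave and nonpositive at 0 and R, the set
   {f >= l_u} is exactly [check rho_u, hat rho_u], and it contains the tangent point
   alpha q_u.  The lines l_{u+} and l_{u-} cross at a point s with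
   alpha q_{u-} < s < alpha q_{u+}; on each side of s one line dominates the other, and
   comparing f with both lines there orders the four contact points.  The estimate comes
   from the quadratic bound f(y) <= f(x) + f'(x)(y - x) - beta/2 (y - x)^2 at
   x = check rho_{u+}, y = check rho_{u-}, combined with f' decreasing at rate beta. *)

(* Composing with [clamp 0 Rr] turns a function known on [0, Rr] into one that is
   continuous on all of R, so that the two-sided Stdlib theorems (MVT, IVT) apply. *)
Definition clamp (a b x : R) : R := Rmax a (Rmin b x).

Lemma clamp_in a b x : a <= b -> a <= clamp a b x <= b.
Proof. intros; unfold clamp, Rmax, Rmin; repeat destruct Rle_dec; lra. Qed.

Lemma clamp_id a b x : a <= x <= b -> clamp a b x = x.
Proof. intros; unfold clamp, Rmax, Rmin; repeat destruct Rle_dec; lra. Qed.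

Lemma clamp_lipschitz a b x y :
  a <= b -> Rabs (clamp a b y - clamp a b x) <= Rabs (y - x).
Proof.
  intros; unfold clamp, Rmax, Rmin; repeat destruct Rle_dec;
  unfold Rabs; repeat destruct Rcase_abs; lra.
Qed.

Lemma continuity_clamp Rr g :
  0 <= Rr -> (forall x, Icc 0 Rr x -> cont_within (Icc 0 Rr) g x) ->
  continuity (fun t => g (clamp 0 Rr t)).
Proof.
  intros HR Hg x eps Heps.
  destruct (Hg (clamp 0 Rr x) (clamp_in 0 Rr x HR) eps Heps) as [alp [Halp H]].
  exists alp; split; [exact Halp|].
  intros y [_ Hy]; simpl in *; unfold Rdist in *.
  apply H; split; [apply clamp_in; exact HR|].
  eapply Rle_lt_trans; [apply clamp_lipschitz; exact HR | exact Hy].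
Qed.

Lemma derivable_pt_lim_clamp Rr g x l :
  0 < x < Rr -> derive_within (Icc 0 Rr) g x l ->
  derivable_pt_lim (fun t => g (clamp 0 Rr t)) x l.
Proof.
  intros Hx H eps Heps.
  destruct (H eps Heps) as [alp [Halp H1]].
  assert (Hpos : 0 < Rmin alp (Rmin x (Rr - x))) by (repeat apply Rmin_pos; lra).
  exists (mkposreal _ Hpos); simpl; intros h hne hlt.
  pose proof (Rmin_l alp (Rmin x (Rr - x))); pose proof (Rmin_r alp (Rmin x (Rr - x))).
  pose proof (Rmin_l x (Rr - x)); pose proof (Rmin_r x (Rr - x)).
  assert (Hh : - Rabs h <= h <= Rabs h) by (unfold Rabs; destruct Rcase_abs; lra).
  rewrite (clamp_id 0 Rr (x + h)), (clamp_id 0 Rr x) by lra.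
  replace h with (x + h - x) at 2 by ring.
  apply (H1 (x + h)); simpl; unfold Rdist, Icc.
  replace (x + h - x) with h by ring.
  repeat split; lra.
Qed.

Lemma cont_within_derive_within D g x l :
  derive_within D g x l -> cont_within D g x.
Proof.
  intros H eps Heps.
  destruct (H 1 Rlt_0_1) as [alp [Halp H1]].
  pose proof (Rabs_pos l) as Hl.
  assert (Hp : 0 < eps / (Rabs l + 1)) by (apply Rdiv_lt_0_compat; lra).
  exists (Rmin alp (eps / (Rabs l + 1))); split; [apply Rmin_pos; lra|].
  intros y [Dy Hy]; simpl in *; unfold Rdist in *.
  destruct (Req_dec y x) as [->|Hne].
  { unfold Rminus; rewrite Rplus_opp_r, Rabs_R0; exact Heps. }
  pose proof (Rmin_l alp (eps / (Rabs l + 1))).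
  pose proof (Rmin_r alp (eps / (Rabs l + 1))).
  assert (Hyx : Rabs (y - x) < alp) by lra.
  specialize (H1 y (conj (conj Dy Hne) Hyx)); simpl in H1; unfold Rdist in H1.
  set (q := (g y - g x) / (y - x)) in H1.
  assert (Hq : Rabs q <= Rabs l + 1).
  { replace q with ((q - l) + l) by ring.
    eapply Rle_trans; [apply Rabs_triang | lra]. }
  replace (g y - g x) with (q * (y - x)) by (unfold q; field; lra).
  rewrite Rabs_mult.
  apply Rle_lt_trans with ((Rabs l + 1) * Rabs (y - x)).
  - apply Rmult_le_compat_r; [apply Rabs_pos | exact Hq].
  - replace eps with ((Rabs l + 1) * (eps / (Rabs l + 1))) by (field; lra).
    apply Rmult_lt_compat_l; lra.
Qed.

Lemma MVT_open (k k' : R -> R) a b :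
  a < b -> (forall c, a < c < b -> derivable_pt_lim k c (k' c)) -> continuity k ->
  exists c, a < c < b /\ k b - k a = k' c * (b - a).
Proof.
  intros Hab Hd Hk.
  assert (pr1 : forall c, a < c < b -> derivable_pt k c)
    by (intros c Hc; exists (k' c); apply Hd, Hc).
  assert (pr2 : forall c, a < c < b -> derivable_pt id c)
    by (intros; apply derivable_pt_id).
  destruct (MVT k id a b pr1 pr2 Hab (fun c _ => Hk c)
              (fun c _ => derivable_continuous_pt _ _ (derivable_pt_id c)))
    as [c [P Heq]].
  exists c; split; [exact P|].
  rewrite (derive_pt_eq_0 _ _ _ (pr1 c P) (Hd c P)),
          (derive_pt_eq_0 _ _ _ (pr2 c P) (derivable_pt_lim_id c)) in Heq.
  unfold id in Heq; lra.
Qed.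

Lemma derivable_pt_lim_plus_quadratic g l a b c :
  derivable_pt_lim g c l ->
  derivable_pt_lim (fun t => g t + a * t + b * (t * t)) c (l + a + 2 * b * c).
Proof.
  intros H.
  replace (l + a + 2 * b * c) with (l + a * 1 + b * (1 * c + c * 1)) by ring.
  apply (derivable_pt_lim_plus (fun t => g t + a * t) (fun t => b * (t * t))).
  - apply (derivable_pt_lim_plus g (fun t => a * t)); [exact H|].
    apply (derivable_pt_lim_scal id), derivable_pt_lim_id.
  - apply (derivable_pt_lim_scal (fun t => t * t)).
    apply (derivable_pt_lim_mult id id); apply derivable_pt_lim_id.
Qed.

Lemma continuity_plus_quadratic g a b :
  continuity g -> continuity (fun t => g t + a * t + b * (t * t)).
Proof.
  intros Hg.
  apply (continuity_plus (fun t => g t + a * t) (fun t => b * (t * t))); [|reg].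
  apply (continuity_plus g (fun t => a * t)); [exact Hg | reg].
Qed.

Lemma derive_within_f_alpha Rr alpha f q l :
  0 < alpha -> derive_within (Icc 0 Rr) f q l ->
  derive_within (Icc 0 (alpha * Rr)) (f_alpha alpha f) (alpha * q) l.
Proof.
  intros Ha H eps Heps.
  destruct (H eps Heps) as [alp [Halp H1]].
  exists (alpha * alp); split; [apply Rmult_lt_0_compat; lra|].
  intros y [[Dy Ne] Hy]; simpl in *; unfold Rdist, Icc in *.
  assert (Ey : y = alpha * (y / alpha)) by (field; lra).
  rewrite Ey in Dy, Ne, Hy |- *.
  set (z := y / alpha) in *; clear Ey.
  assert (Ez : (f_alpha alpha f (alpha * z) - f_alpha alpha f (alpha * q))
                 / (alpha * z - alpha * q) = (f z - f q) / (z - q)).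
  { unfold f_alpha; replace (alpha * z / alpha) with z by (field; lra).
    replace (alpha * q / alpha) with q by (field; lra).
    field; split; [|lra]; intro; apply Ne; nra. }
  rewrite Ez; apply H1; repeat split.
  - nra.
  - apply (Rmult_le_reg_l alpha); lra.
  - intros ->; apply Ne; reflexivity.
  - replace (alpha * z - alpha * q) with (alpha * (z - q)) in Hy by ring.
    rewrite Rabs_mult, (Rabs_right alpha) in Hy by lra.
    apply (Rmult_lt_reg_l alpha); lra.
Qed.

Lemma derive_within_Icc_unique m g r l l' :
  0 < m -> Icc 0 m r ->
  derive_within (Icc 0 m) g r l -> derive_within (Icc 0 m) g r l' -> l = l'.
Proof.
  intros Hm Hr; apply single_limit; intros alp Halp.
  destruct (Rlt_le_dec r m).
  - exists (r + Rmin alp (m - r) / 2).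
    assert (0 < Rmin alp (m - r)) by (apply Rmin_pos; lra).
    pose proof (Rmin_l alp (m - r)); pose proof (Rmin_r alp (m - r)).
    unfold Icc, Rdist in *; split; [split; lra|].
    rewrite Rabs_right; lra.
  - exists (r - Rmin alp m / 2).
    assert (0 < Rmin alp m) by (apply Rmin_pos; lra).
    pose proof (Rmin_l alp m); pose proof (Rmin_r alp m).
    unfold Icc, Rdist in *; split; [split; lra|].
    rewrite Rabs_left; lra.
Qed.

Lemma f_alpha_tangent_point Rr alpha f f' r u :
  0 < alpha -> 0 < Rr -> (forall x, Icc 0 Rr x -> derive_within (Icc 0 Rr) f x (f' x)) ->
  Icc 0 (alpha * Rr) r -> derive_within (Icc 0 (alpha * Rr)) (f_alpha alpha f) r u ->
  exists q, Icc 0 Rr q /\ r = alpha * q /\ f' q = u.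
Proof.
  intros Ha HR Hf Hr Hd.
  assert (Er : r = alpha * (r / alpha)) by (field; lra).
  assert (Hq : Icc 0 Rr (r / alpha)).
  { unfold Icc in *; rewrite Er in Hr; split; [nra|].
    apply (Rmult_le_reg_l alpha); lra. }
  exists (r / alpha); repeat split; try apply Hq; [exact Er|].
  rewrite Er in Hr, Hd.
  apply (derive_within_Icc_unique (alpha * Rr) (f_alpha alpha f) (alpha * (r / alpha)));
    [nra | exact Hr | | exact Hd].
  apply derive_within_f_alpha, Hf, Hq; exact Ha.
Qed.

Lemma nonneg_between_extreme_zeros (G : R -> R) (S : R -> Prop) a b c h :
  continuity G -> G a <= 0 -> G b <= 0 ->
  (forall t, S t <-> a <= t <= b /\ G t = 0) -> is_min S c -> is_max S h ->
  forall t, a <= t <= b -> 0 <= G t -> c <= t <= h.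
Proof.
  intros HG Ha Hb HS [_ Hmin] [_ Hmax] t Ht Gt.
  destruct (IVT_cor G a t HG ltac:(lra) ltac:(nra)) as [z [Hz Gz]].
  destruct (IVT_cor G t b HG ltac:(lra) ltac:(nra)) as [z' [Hz' Gz']].
  assert (Sz : S z) by (apply HS; split; [lra | exact Gz]).
  assert (Sz' : S z') by (apply HS; split; [lra | exact Gz']).
  specialize (Hmin z Sz); specialize (Hmax z' Sz'); lra.
Qed.

Definition contact (f : R -> R) (Rr A u c h : R) : Prop :=
  (Icc 0 Rr c /\ f c = A + u * c) /\ (Icc 0 Rr h /\ f h = A + u * h) /\
  (forall t, Icc 0 Rr t -> A + u * t <= f t -> c <= t <= h).

Lemma contact_lt f Rr A u c h t :
  contact f Rr A u c h -> Icc 0 Rr t -> A + u * t < f t -> c < t < h.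
Proof.
  intros [[_ Ec] [[_ Eh] Hbr]] Ht Hlt.
  destruct (Hbr t Ht (Rlt_le _ _ Hlt)) as [H1 H2].
  split; [destruct H1 as [H1 | <-] | destruct H2 as [H2 | ->]]; lra.
Qed.

Section StronglyConcave.

Variables (Rr beta : R) (f f1 f2 : R -> R).
Hypotheses (HR : 0 < Rr) (Hbeta : 0 < beta) (Hf : C2_on (Icc 0 Rr) f f1 f2)
  (Hf2 : forall x, Icc 0 Rr x -> f2 x <= - beta).

Lemma f_clamp_continuous : continuity (fun t => f (clamp 0 Rr t)).
Proof.
  apply continuity_clamp; [lra|]; intros x Hx.
  apply (cont_within_derive_within _ _ _ (f1 x)), Hf, Hx.
Qed.

Lemma f1_decrease x y : 0 <= x -> x <= y -> y <= Rr -> f1 y <= f1 x - beta * (y - x).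
Proof.
  intros Hx Hxy Hy.
  destruct (Req_dec x y) as [->|Hne]; [lra|].
  destruct (MVT_open (fun t => f1 (clamp 0 Rr t)) f2 x y) as [c [Hc Heq]].
  - lra.
  - intros c Hc; apply derivable_pt_lim_clamp; [lra|]; apply Hf; unfold Icc; lra.
  - apply continuity_clamp; [lra|]; intros z Hz.
    apply (cont_within_derive_within _ _ _ (f2 z)), Hf, Hz.
  - rewrite (clamp_id 0 Rr x), (clamp_id 0 Rr y) in Heq by lra.
    assert (f2 c <= - beta) by (apply Hf2; unfold Icc; lra).
    nra.
Qed.

Lemma f_le_tangent x y :
  Icc 0 Rr x -> Icc 0 Rr y ->
  f y <= f x + f1 x * (y - x) - beta / 2 * ((y - x) * (y - x)).
Proof.
  unfold Icc; intros Hx Hy.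
  set (a := - f1 x - beta * x).
  set (k := fun t => f (clamp 0 Rr t) + a * t + beta / 2 * (t * t)).
  set (k' := fun c => f1 c + a + 2 * (beta / 2) * c).
  (* [k' c = f1 c - f1 x + beta (c - x)], of the sign of [x - c] by [f1_decrease] *)
  assert (Hk : forall t, 0 <= t <= Rr -> k t = f t + a * t + beta / 2 * (t * t))
    by (intros t Ht; unfold k; rewrite clamp_id by exact Ht; reflexivity).
  assert (Hd : forall c, 0 < c < Rr -> derivable_pt_lim k c (k' c)).
  { intros c Hc; apply derivable_pt_lim_plus_quadratic, derivable_pt_lim_clamp; [lra|].
    apply Hf; unfold Icc; lra. }
  assert (Hc : continuity k) by apply continuity_plus_quadratic, f_clamp_continuous.
  enough (k y <= k x) by (rewrite !Hk in * by lra; unfold a in *; nra).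
  destruct (Rtotal_order x y) as [Hlt|[->|Hgt]]; [| lra |].
  - destruct (MVT_open k k' x y Hlt (fun c H => Hd c ltac:(lra)) Hc) as [c [Hxc Heq]].
    pose proof (f1_decrease x c ltac:(lra) ltac:(lra) ltac:(lra)).
    unfold k', a in Heq; nra.
  - destruct (MVT_open k k' y x Hgt (fun c H => Hd c ltac:(lra)) Hc) as [c [Hxc Heq]].
    pose proof (f1_decrease c x ltac:(lra) ltac:(lra) ltac:(lra)).
    unfold k', a in Heq; nra.
Qed.

Lemma f_le_tangent_line x y :
  Icc 0 Rr x -> Icc 0 Rr y -> f y <= f x + f1 x * (y - x).
Proof.
  intros Hx Hy; pose proof (f_le_tangent x y Hx Hy).
  assert (0 <= beta / 2 * ((y - x) * (y - x))) by (apply Rmult_le_pos; [lra | apply Rle_0_sqr]).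
  lra.
Qed.

Lemma f_concave t x y :
  0 <= t <= 1 -> Icc 0 Rr x -> Icc 0 Rr y ->
  t * f x + (1 - t) * f y <= f (t * x + (1 - t) * y).
Proof.
  intros Ht Hx Hy.
  set (z := t * x + (1 - t) * y).
  assert (Hz : Icc 0 Rr z) by (unfold Icc, z in *; split; nra).
  pose proof (Rmult_le_compat_l t _ _ ltac:(lra) (f_le_tangent_line z x Hz Hx)).
  pose proof (Rmult_le_compat_l (1 - t) _ _ ltac:(lra) (f_le_tangent_line z y Hz Hy)).
  assert (f1 z * (t * (x - z) + (1 - t) * (y - z)) = 0) by (unfold z; ring).
  lra.
Qed.

Lemma f_gt_chord A s x y z :
  0 <= x -> x < y -> y < z -> z <= Rr -> f x = A + s * x -> f z = A + s * z ->
  A + s * y < f y.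
Proof.
  intros Hx Hxy Hyz Hz Ex Ez.
  pose proof (f_le_tangent y x ltac:(unfold Icc; lra) ltac:(unfold Icc; lra)).
  pose proof (f_le_tangent y z ltac:(unfold Icc; lra) ltac:(unfold Icc; lra)).
  set (G := f y - A - s * y) in *.
  (* weighting the two tangent bounds by [z - y] and [y - x] cancels the slope [f1 y] *)
  assert (HG : (z - x) * G >= beta / 2 * (y - x) * (z - y) * (z - x)) by (unfold G; nra).
  assert (0 < beta / 2 * (y - x) * (z - y) * (z - x))
    by (repeat apply Rmult_lt_0_compat; lra).
  unfold G in HG; nra.
Qed.

Hypotheses (Hf0 : f 0 = 0) (HfR : f Rr = 0).

Lemma Iset_contact alpha q u c h :
  0 < alpha < 1 -> Icc 0 Rr q -> f1 q = u -> 0 <= u ->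
  is_min (Iset Rr alpha f u (alpha * q)) c -> is_max (Iset Rr alpha f u (alpha * q)) h ->
  contact f Rr (alpha * f q - u * (alpha * q)) u c h.
Proof.
  intros Ha Hq Fq Hu Hc Hh.
  set (A := alpha * f q - u * (alpha * q)).
  assert (HS : forall t, Iset Rr alpha f u (alpha * q) t <-> Icc 0 Rr t /\ f t = A + u * t).
  { intros t; unfold Iset, phi, f_alpha, A.
    replace (alpha * q / alpha) with q by (field; lra).
    replace (alpha * f q + u * (t - alpha * q)) with (alpha * f q - u * (alpha * q) + u * t)
      by ring.
    reflexivity. }
  assert (I0 : Icc 0 Rr 0) by (unfold Icc; lra).
  assert (IR : Icc 0 Rr Rr) by (unfold Icc; lra).
  pose proof (f_le_tangent_line q 0 Hq I0) as T0; rewrite Hf0, Fq in T0.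
  pose proof (f_le_tangent_line q Rr Hq IR) as TR; rewrite HfR, Fq in TR.
  assert (HA0 : 0 <= A).
  { assert (0 <= alpha * (f q + u * (0 - q))) by (apply Rmult_le_pos; lra).
    unfold A; lra. }
  assert (HAR : 0 <= A + u * Rr).
  { assert (0 <= alpha * (f q + u * (Rr - q))) by (apply Rmult_le_pos; lra).
    assert (0 <= (1 - alpha) * (u * Rr)) by (apply Rmult_le_pos; [|apply Rmult_le_pos]; lra).
    unfold A; lra. }
  split; [apply HS, Hc | split; [apply HS, Hh|]].
  intros t Ht Hle.
  set (G := fun t => f (clamp 0 Rr t) - (A + u * t)).
  assert (HG : forall t, Icc 0 Rr t -> G t = f t - (A + u * t))
    by (intros x Hx; unfold G; rewrite clamp_id by exact Hx; reflexivity).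
  apply (nonneg_between_extreme_zeros G (Iset Rr alpha f u (alpha * q)) 0 Rr);
    [ | rewrite HG by (unfold Icc; lra); lra | rewrite HG by (unfold Icc; lra); lra
    | | exact Hc | exact Hh | exact Ht | rewrite HG by exact Ht; lra].
  - apply (continuity_minus (fun t => f (clamp 0 Rr t)) (fun t => A + u * t));
      [apply f_clamp_continuous | reg].
  - intros x; rewrite HS; split; intros [Hx E]; split; try exact Hx;
      [rewrite HG by exact Hx | rewrite HG in E by exact Hx]; lra.
Qed.

Lemma tangent_point_in_contact alpha q u c h :
  0 < alpha < 1 -> Icc 0 Rr q -> contact f Rr (alpha * f q - u * (alpha * q)) u c h ->
  c <= alpha * q <= h.
Proof.
  intros Ha Hq [_ [_ Hbr]]; unfold Icc in *.
  apply Hbr; [unfold Icc; split; nra|].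
  pose proof (f_concave alpha q 0 ltac:(lra) ltac:(unfold Icc; lra) ltac:(unfold Icc; lra)).
  rewrite Hf0 in H; replace (alpha * q + (1 - alpha) * 0) with (alpha * q) in H by ring.
  lra.
Qed.

Section TwoTangents.

Variables (alpha up um qp qm cp hp cm hm : R).
Hypotheses (Halpha : 0 < alpha < 1) (Hqp : Icc 0 Rr qp) (Hqm : Icc 0 Rr qm)
  (Fp : f1 qp = up) (Fm : f1 qm = um) (Hupm : up < um).

Let Ap := alpha * f qp - up * (alpha * qp).
Let Am := alpha * f qm - um * (alpha * qm).

Hypotheses (Cp : contact f Rr Ap up cp hp) (Cm : contact f Rr Am um cm hm) (Hgap : cp < hm).

(* abscissa where the two lines cross *)
Let s := (Ap - Am) / (um - up).

Lemma lines_diff t : Ap + up * t - (Am + um * t) = (um - up) * (s - t).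
Proof. unfold s; field; lra. Qed.

Lemma crossing_between : alpha * qm < s < alpha * qp.
Proof.
  assert (Hsq : 0 < (qm - qp) * (qm - qp)).
  { assert (Hne : qm - qp <> 0) by (intros E; replace qm with qp in Fm by lra; lra).
    exact (Rsqr_pos_lt _ Hne). }
  assert (Hb : 0 < alpha * (beta / 2 * ((qm - qp) * (qm - qp))))
    by (apply Rmult_lt_0_compat; [|apply Rmult_lt_0_compat]; lra).
  pose proof (f_le_tangent qp qm Hqp Hqm) as Tp.
  pose proof (f_le_tangent qm qp Hqm Hqp) as Tm.
  assert (Em : (um - up) * (s - alpha * qm) = alpha * (f qp + f1 qp * (qm - qp) - f qm))
    by (rewrite <- lines_diff; unfold Ap, Am; rewrite Fp; ring).
  assert (Ep : (um - up) * (alpha * qp - s) = alpha * (f qm + f1 qm * (qp - qm) - f qp))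
    by (replace ((um - up) * (alpha * qp - s)) with (- ((um - up) * (s - alpha * qp)))
          by ring;
        rewrite <- lines_diff; unfold Ap, Am; rewrite Fm; ring).
  replace ((qp - qm) * (qp - qm)) with ((qm - qp) * (qm - qp)) in Tm by ring.
  split; apply (Rmult_lt_reg_l (um - up)); nra.
Qed.

Lemma cp_lt_crossing : cp < s.
Proof.
  destruct (Rlt_le_dec cp s) as [|Hle]; [assumption|]; exfalso.
  pose proof crossing_between.
  pose proof (tangent_point_in_contact alpha qm um cm hm Halpha Hqm Cm).
  destruct Cm as [[Icm Ecm] [[Ihm Ehm] _]]; unfold Icc in *.
  pose proof (f_gt_chord Am um cm s hm ltac:(lra) ltac:(lra) ltac:(lra) ltac:(lra) Ecm Ehm).
  pose proof (lines_diff s).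
  pose proof (contact_lt f Rr Ap up cp hp s Cp ltac:(unfold Icc; lra) ltac:(nra)).
  lra.
Qed.

Lemma crossing_lt_hm : s < hm.
Proof.
  destruct (Rlt_le_dec s hm) as [|Hle]; [assumption|]; exfalso.
  pose proof crossing_between.
  pose proof (tangent_point_in_contact alpha qp up cp hp Halpha Hqp Cp).
  destruct Cp as [[Icp Ecp] [[Ihp Ehp] _]]; unfold Icc in *.
  pose proof (f_gt_chord Ap up cp s hp ltac:(lra) ltac:(lra) ltac:(lra) ltac:(lra) Ecp Ehp).
  pose proof (lines_diff s).
  pose proof (contact_lt f Rr Am um cm hm s Cm ltac:(unfold Icc; lra) ltac:(nra)).
  lra.
Qed.

Lemma contact_points_order : cm < cp /\ cp < hm /\ hm < hp.
Proof.
  pose proof cp_lt_crossing; pose proof crossing_lt_hm.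
  pose proof (lines_diff cp); pose proof (lines_diff hm).
  destruct Cp as [[Icp Ecp] _]; destruct Cm as [_ [[Ihm Ehm] _]].
  pose proof (contact_lt f Rr Am um cm hm cp Cm Icp ltac:(nra)).
  pose proof (contact_lt f Rr Ap up cp hp hm Cp Ihm ltac:(nra)).
  lra.
Qed.

Lemma speed_gap : um - up >= beta / 2 * (cp - cm).
Proof.
  pose proof cp_lt_crossing; pose proof crossing_between.
  pose proof (proj1 contact_points_order) as Hcc.
  destruct Cp as [[Icp Ecp] _]; destruct Cm as [[Icm Ecm] _]; unfold Icc in *.
  set (d := cp - cm); set (D := um - up).
  assert (Hs : s <= qp) by nra.
  pose proof (f1_decrease cp qp ltac:(lra) ltac:(lra) ltac:(lra)) as Hslope.
  pose proof (f_le_tangent cp cm ltac:(unfold Icc; lra) ltac:(unfold Icc; lra)) as Hquad.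
  (* [D (s - cm)] is the height of the line of slope [up] above [f] at [cm]; the quadratic
     bound at [cp] bounds it from below *)
  assert (Hgap_cm : D * (s - cm) >= (f1 cp - up) * d + beta / 2 * (d * d)).
  { pose proof (lines_diff cm); unfold D, d in *; nra. }
  assert (Hslope' : f1 cp - up >= beta / 2 * (s - cp)) by nra.
  assert (Hprod : (D - beta / 2 * d) * (s - cm) >= 0) by (unfold d in *; nra).
  assert (0 < s - cm) by lra.
  unfold D, d in *; nra.
Qed.

End TwoTangents.

End StronglyConcave.

Theorem mainTheorem6
  (Rr B beta : R) (f f1 f2 v v1 v2 : R -> R)
  (HR : 0 < Rr)
  (Hf_nonneg : forall x, Icc 0 Rr x -> 0 <= f x)
  (Hv_nonneg : forall x, Icc 0 Rr x -> 0 <= v x)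
  (Hfv : forall x, Icc 0 Rr x -> f x = x * v x)
  (Hf_C2 : C2_on (Icc 0 Rr) f f1 f2)
  (Hv_C2 : C2_on (Icc 0 Rr) v v1 v2)
  (Hf0 : f 0 = 0) (HfR : f Rr = 0)
  (Hbeta : 0 < beta) (HbB : beta <= B)
  (Hf2 : forall x, Icc 0 Rr x -> - B <= f2 x <= - beta)
  (Hv1 : forall x, 0 < x < Rr -> v1 x < 0)
  (alpha : R) (Halpha : 0 < alpha < 1)
  (up um : R) (Hu : 0 <= up /\ up < um /\ um <= v 0)
  (rtp rtm : R)
  (Hrtp : Icc 0 (alpha * Rr) rtp /\
          derive_within (Icc 0 (alpha * Rr)) (f_alpha alpha f) rtp up)
  (Hrtm : Icc 0 (alpha * Rr) rtm /\
          derive_within (Icc 0 (alpha * Rr)) (f_alpha alpha f) rtm um)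
  (cp hp cm hm : R)
  (Hcp : is_min (Iset Rr alpha f up rtp) cp)
  (Hhp : is_max (Iset Rr alpha f up rtp) hp)
  (Hcm : is_min (Iset Rr alpha f um rtm) cm)
  (Hhm : is_max (Iset Rr alpha f um rtm) hm)
  (Hgap : hm > cp) :
  (cm < cp /\ cp < hm /\ hm < hp) /\ um - up >= beta / 2 * (cp - cm).
Proof.
  destruct Hu as [Hup [Hupm _]].
  assert (Hf2' : forall x, Icc 0 Rr x -> f2 x <= - beta) by (intros x Hx; apply Hf2, Hx).
  assert (Hf' : forall x, Icc 0 Rr x -> derive_within (Icc 0 Rr) f x (f1 x))
    by (intros x Hx; apply Hf_C2, Hx).
  destruct Hrtp as [Irtp Drtp]; destruct Hrtm as [Irtm Drtm].
  destruct (f_alpha_tangent_point Rr alpha f f1 rtp up ltac:(lra) HR Hf' Irtp Drtp)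
    as [qp [Iqp [-> Fp]]].
  destruct (f_alpha_tangent_point Rr alpha f f1 rtm um ltac:(lra) HR Hf' Irtm Drtm)
    as [qm [Iqm [-> Fm]]].
  assert (Cp : contact f Rr (alpha * f qp - up * (alpha * qp)) up cp hp)
    by (eapply Iset_contact; eauto).
  assert (Cm : contact f Rr (alpha * f qm - um * (alpha * qm)) um cm hm)
    by (eapply Iset_contact; eauto; lra).
  split;
    [ apply (contact_points_order Rr beta f f1 f2 HR Hbeta Hf_C2 Hf2' Hf0 alpha up um qp qm cp hp cm hm)
    | apply (speed_gap Rr beta f f1 f2 HR Hbeta Hf_C2 Hf2' Hf0 alpha up um qp qm cp hp cm hm) ];
    assumption.
Qed.
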